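(* Any time-optimal trajectory of the problem below (with $T>0$) ends with an $X$-arc; that is, the control $A$ equals $X$ on some interval $(T-\delta,T]$, $\delta>0$.
   Context: Fix $\gamma\in(0,\pi/2)$, $s=\sin\gamma$, $c=\cos\gamma$, and $X=\begin{pmatrix}0&s^2&sc\\-s^2&0&0\\-sc&0&0\end{pmatrix}$, $Y=\begin{pmatrix}0&1&0\\-1&0&0\\0&0&0\end{pmatrix}$ on $\mathbb R^3$ with standard basis $e_1,e_2,e_3$. Let $\Sigma=\{\psi:\langle e_3,\psi\rangle=0\}$, $\psi_0=(0,s,c)^\top$. Time-optimal problem: over piecewise constant controls $A:[0,T]\to\{X,Y\}$ with finitely many discontinuities and trajectories $\dot\psi=A(t)\psi$, $\psi(0)=\psi_0$, minimize $T$ subject to $\psi(T)\in\Sigma$. Maximal intervals on which $A\equiv X$ are called $X$-arcs. *)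

From HB Require Import structures.
From mathcomp Require Import all_boot all_order all_algebra.
From mathcomp Require Import all_classical all_reals all_analysis.
Set Implicit Arguments. Unset Strict Implicit. Unset Printing Implicit Defensive.
Import Order.TTheory GRing.Theory Num.Theory.
Import numFieldNormedType.Exports.
Local Open Scope ring_scope.
Local Open Scope classical_set_scope.
Local Open Scope ring_scope.

Section Defs.
Variable R : realType.

Definition mx3 (rows : seq (seq R)) : 'M[R]_3 :=
  \matrix_(i < 3, j < 3) nth 0 (nth [::] rows i) j.

Definition cv3 (a b c : R) : 'cV[R]_3 := \col_(i < 3) nth 0 [:: a; b; c] i.

Definition Xmx (gamma : R) : 'M[R]_3 :=
  let s := sin gamma in let c := cos gamma in
  mx3 [:: [:: 0; s ^+ 2; s * c]; [:: - s ^+ 2; 0; 0]; [:: - (s * c); 0; 0]].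

Definition Ymx : 'M[R]_3 :=
  mx3 [:: [:: 0; 1; 0]; [:: -1; 0; 0]; [:: 0; 0; 0]].

Definition psi0 (gamma : R) : 'cV[R]_3 := cv3 0 (sin gamma) (cos gamma).

Inductive ctrl := CX | CY.

Definition ctrlmx (gamma : R) (a : ctrl) : 'M[R]_3 :=
  match a with CX => Xmx gamma | CY => Ymx end.

Definition inSigma (v : 'cV[R]_3) : Prop := v ord_max 0 = 0.

Definition admissible (gamma T : R) (A : R -> ctrl) (psi : R -> 'cV[R]_3) : Prop :=
  0 <= T /\
  (exists (n : nat) (tt : nat -> R),
      tt 0%N = 0 /\ tt n = T /\
      (forall i, (i < n)%N -> tt i < tt i.+1) /\
      (forall i, (i < n)%N -> exists a, forall t, tt i < t < tt i.+1 -> A t = a) /\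
      (forall t, 0 < t < T -> (forall i, (i <= n)%N -> t != tt i) ->
         is_derive t 1 psi (ctrlmx gamma (A t) *m psi t))) /\
  {within `[0, T]%classic, continuous psi} /\
  psi 0 = psi0 gamma.

Definition time_optimal (gamma T : R) (A : R -> ctrl) (psi : R -> 'cV[R]_3) : Prop :=
  admissible gamma T A psi /\ inSigma (psi T) /\
  forall T' A' psi', admissible gamma T' A' psi' -> inSigma (psi' T') -> T <= T'.

End Defs.

From HB Require Import structures.
From mathcomp Require Import all_boot all_order all_algebra.
From mathcomp Require Import all_classical all_reals all_analysis.
Import Order.TTheory GRing.Theory Num.Theory.
Import numFieldNormedType.Exports.
Local Open Scope classical_set_scope.
Local Open Scope ring_scope.

(** Y leaves the third coordinate fixed: the last row of Y is zero, so on a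
   Y-arc the quantity <e3, psi> is constant.  Hence if an optimal trajectory
   ended with a Y-arc starting at t0 < T, then psi t0 would already lie in
   Sigma, and the process stopped at its last switching time t0 would be an
   admissible competitor reaching Sigma strictly earlier.  The argument does
   not use the range of gamma. *)

Lemma is_derive_mx_entry {R : realFieldType} {V : normedModType R} {m n : nat}
    (i : 'I_m) (j : 'I_n) {M : V -> 'M[R]_(m, n)} {t v : V} {D : 'M[R]_(m, n)} :
  is_derive t v M D -> is_derive t v (fun x => M x i j) (D i j).
Proof.
move=> [dM <-]; apply: DeriveDef; first exact: (derivable_mxP M t v).1 dM i j.
by rewrite derive_mx // mxE.
Qed.

Lemma homo_ltn_lt_upto {d : Order.disp_t} {T : porderType d} {f : nat -> T} {n : nat} :
  (forall i, (i < n)%N -> (f i < f i.+1)%O) ->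
  {in [pred i | (i <= n)%N] &, {homo f : i j / (i < j)%N >-> (i < j)%O}}.
Proof.
move=> f_inc; apply: Order.NatMonotonyTheory.homo_ltn_lt_in => [i j _|i].
  by rewrite !inE => jn k /andP[_ /ltnW /leq_trans]; apply.
by rewrite !inE => _; apply: f_inc.
Qed.

Lemma Ymx_mul_last {R : realType} (v : 'cV[R]_3) : (Ymx R *m v) ord_max 0 = 0.
Proof.
rewrite mxE big1 // => k _; rewrite !mxE /=.
by rewrite -[[:: 0; 0; 0]]/(nseq 3 0) nth_nseq if_same mul0r.
Qed.

Lemma Y_arc_last_coord {R : realType} {psi : R -> 'cV[R]_3} {a b : R} : a < b ->
  {within `[a, b], continuous psi} ->
  (forall t, a < t < b -> is_derive t 1 psi (Ymx R *m psi t)) ->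
  psi b ord_max 0 = psi a ord_max 0.
Proof.
move=> ab psi_cont psi_der; apply/eqP; rewrite -subr_eq0; apply/eqP.
have last_der t : t \in `]a, b[ -> is_derive t 1 (fun s => psi s ord_max 0) (0 : R).
  rewrite in_itv /= => /psi_der /(is_derive_mx_entry ord_max 0).
  by rewrite Ymx_mul_last.
have last_cont : {within `[a, b], continuous (fun s => psi s ord_max 0)}.
  apply: (@within_continuous_comp _ _ _ _ _ (fun M : 'cV[R]_3 => M ord_max 0) _ psi_cont).
  by move=> M _; exact/differentiable_continuous/differentiable_coord.
by have [c _ ->] := MVT ab last_der last_cont; rewrite mul0r.
Qed.

Lemma admissible_last_arc {R : realType} {gamma T : R} {A psi} :
  admissible gamma T A psi -> 0 < T ->
  exists t0 a, [/\ t0 < T, admissible gamma t0 A psi,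
    forall t, t0 < t < T -> A t = a &
    forall t, t0 < t < T -> is_derive t 1 psi (ctrlmx gamma a *m psi t)].
Proof.
move=> [_ [[n [tt [tt0 [ttn [tt_inc [tt_pc tt_der]]]]]] [psi_cont psi_0]]] T_gt0.
case: n ttn tt_inc tt_pc tt_der => [|m] ttn tt_inc tt_pc tt_der.
  by move: T_gt0; rewrite -ttn tt0 ltxx.
have tt_le i : (i <= m)%N -> tt i <= tt m.
  rewrite leq_eqVlt => /orP[/eqP-> // | im].
  by apply/ltW/(homo_ltn_lt_upto tt_inc _ _ _ _ im); rewrite inE ltnW // ltnW.
have t0T : tt m < T by rewrite -ttn tt_inc.
have [a Aa] := tt_pc m (ltnSn m).
exists (tt m), a; split => //.
- split; first by rewrite -tt0 tt_le.
  split; last split => //.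
    exists m, tt; do 2!split => //; split; first by move=> i /leqW /tt_inc.
    split; first by move=> i /leqW /tt_pc.
    move=> t /andP[t_gt0 t_lt] t_ne; apply: tt_der; first by rewrite t_gt0 (lt_trans t_lt).
    move=> i; rewrite leq_eqVlt ltnS => /orP[/eqP-> | /t_ne //].
    by rewrite ttn lt_eqF // (lt_trans t_lt t0T).
  by apply: continuous_subspaceW psi_cont; apply: subset_itv; rewrite bnd_simp // ltW.
- by move=> t; rewrite -ttn; exact: Aa.
- move=> t /andP[mt tT]; rewrite -(Aa t) ?ttn ?mt //; apply: tt_der.
    by rewrite tT andbT (le_lt_trans _ mt) // -tt0 tt_le.
  move=> i; rewrite leq_eqVlt ltnS => /orP[/eqP-> | /tt_le im]; first by rewrite ttn lt_eqF.
  by rewrite gt_eqF // (le_lt_trans im mt).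
Qed.

Theorem lemmaA1 (R : realType) (gamma : R) (T : R) (A : R -> ctrl)
  (psi : R -> 'cV[R]_3) :
  0 < gamma < pi / 2 ->
  time_optimal gamma T A psi ->
  0 < T ->
  exists2 delta : R, 0 < delta & forall t, T - delta < t < T -> A t = CX.
Proof.
move=> _ [adm [psiT_Sigma optimal]] T_gt0.
have [t0 [[] [t0T adm0 A_last psi_der]]] := admissible_last_arc adm T_gt0.
  by exists (T - t0); rewrite ?subr_gt0 // opprB addrC subrK.
have psi_cont : {within `[t0, T], continuous psi}.
  case: adm => _ [_ [psi_cont _]]; apply: continuous_subspaceW psi_cont.
  by apply: subset_itv; rewrite bnd_simp; case: adm0.
have psit0_Sigma : inSigma (psi t0).
  by rewrite /inSigma -(Y_arc_last_coord t0T psi_cont psi_der).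
by have := optimal _ _ _ adm0 psit0_Sigma; rewrite leNgt t0T.
Qed.
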